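(* For every boolean function $f:\{-1,1\}^n\to\{-1,1\}$ and every $\epsilon\in(0,\tfrac12)$, $$\sum_{S\subseteq[n]}|\hat f(S)|^{2(1+\epsilon)}\ge 1-(3\epsilon+2\epsilon^2)I(f)-\sum_{k=1}^n\Big(\Big(\frac{I_k(f)}{4}\Big)^{-\epsilon}-1\Big)I_k(f),$$ where terms with $I_k(f)=0$ in the last sum are interpreted as $0$.
   Context: Let $x$ be uniform on $\{-1,1\}^n$; $\mu_k$ flips the $k$-th coordinate; $I_k(f)=\mathbb{P}_x[f(x)\neq f(\mu_k(x))]$, $I(f)=\sum_k I_k(f)$; $\hat f(S)=\mathbb{E}_x[f(x)\prod_{k\in S}x_k]$ for $S\subseteq[n]$. *)

From HB Require Import structures.
From mathcomp Require Import all_boot all_order all_algebra.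
From mathcomp Require Import reals exp.
Set Implicit Arguments. Unset Strict Implicit. Unset Printing Implicit Defensive.
Import Order.TTheory GRing.Theory Num.Theory.
Local Open Scope ring_scope.

(* A point of {-1,1}^n is encoded by x : {ffun 'I_n -> bool};
   its k-th coordinate is (-1)^(x k), i.e. true <-> -1, false <-> 1. *)
Definition cube (n : nat) := {ffun 'I_n -> bool}.

Definition coord {R : realType} {n : nat} (x : cube n) (k : 'I_n) : R :=
  (-1) ^+ (x k).

Definition flip {n : nat} (k : 'I_n) (x : cube n) : cube n :=
  [ffun i => if i == k then ~~ x i else x i].

Definition is_boolean_fun {R : realType} {n : nat} (f : cube n -> R) : Prop :=
  forall x, f x = 1 \/ f x = -1.

Definition infl {R : realType} {n : nat} (f : cube n -> R) (k : 'I_n) : R :=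
  (#|[set x : cube n | f x != f (flip k x)]|%:R) / (2 ^+ n).

Definition total_infl {R : realType} {n : nat} (f : cube n -> R) : R :=
  \sum_(k < n) infl f k.

Definition fourier {R : realType} {n : nat} (f : cube n -> R) (S : {set 'I_n}) : R :=
  (\sum_(x : cube n) f x * \prod_(k in S) coord x k) / (2 ^+ n).

(* The quantity E := sum_S w_S ln w_S with w_S = fhat(S)^2 (a probability
   distribution on subsets by Parseval) controls both sides.  Pointwise,
   |a|^(2(1+eps)) = a^2 (a^2)^eps >= a^2 + eps a^2 ln a^2, so the left-hand side
   is at least 1 + eps E.  Conversely, by Gibbs' inequality the entropy -E of w
   is at most its cross entropy against the product distribution whose k-th
   marginal is the probability I_k = sum_(S ∋ k) w_S that S contains k; that
   cross entropy is the sum of the binary entropies h(I_k) <= -I_k ln I_k + I_k.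
   Finally eps (-I ln I + I) is bounded termwise by the right-hand side, using
   (I/4)^(-eps) >= 1 - eps ln (I/4). *)
From Pilot Require Import Defs.
From HB Require Import structures.
From mathcomp Require Import all_boot all_order all_algebra.
From mathcomp Require Import reals exp.
From mathcomp Require Import ring lra.
Set Implicit Arguments. Unset Strict Implicit. Unset Printing Implicit Defensive.
Import Order.TTheory GRing.Theory Num.Theory.
Local Open Scope ring_scope.

Section Characters.
Variables (R : realType) (n : nat).
Local Notation coord := (@Defs.coord R n).

Definition character (S : {set 'I_n}) (x : cube n) : R := \prod_(k in S) coord x k.

Lemma coordE (x : cube n) k : coord x k = if x k then -1 else 1.
Proof. by rewrite /coord; case: (x k); rewrite ?expr1 ?expr0. Qed.

Lemma sum_set_prod (c : 'I_n -> R) :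
  \sum_(S : {set 'I_n}) \prod_(k in S) c k = \prod_(k < n) (c k + 1).
Proof. by rewrite bigA_distr; apply: eq_bigr => S _; rewrite big_mkcond. Qed.

Lemma character_orthogonal (x y : cube n) :
  \sum_(S : {set 'I_n}) character S x * character S y = if x == y then 2 ^+ n else 0.
Proof.
under eq_bigr => S _ do rewrite /character -big_split /=.
rewrite sum_set_prod; case: eqP => [->|/eqP neq_xy].
  rewrite (eq_bigr (fun _ => 2)) ?prodr_const ?card_ord // => k _.
  by rewrite !coordE; case: (y k); rewrite ?mulrNN mulr1.
have [k neq_k] : exists k, x k != y k.
  apply/existsP; apply: contraR neq_xy; rewrite negb_exists => /forallP eq_xy.
  by apply/eqP/ffunP => k; apply/eqP; rewrite -[_ == _]negbK eq_xy.
rewrite (bigD1 k) //= !coordE.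
by move: neq_k; case: (x k); case: (y k) => //= _;
  rewrite ?mulrN1 ?mulN1r ?opprK addNr mul0r.
Qed.

Lemma plancherel (f g : cube n -> R) :
  \sum_(S : {set 'I_n}) fourier f S * fourier g S =
  (\sum_(x : cube n) f x * g x) / 2 ^+ n.
Proof.
have sum_products : \sum_(S : {set 'I_n})
    (\sum_x f x * character S x) * (\sum_y g y * character S y) =
    2 ^+ n * \sum_x f x * g x.
  under eq_bigr => S _ do rewrite big_distrl /=.
  rewrite exchange_big mulr_sumr; apply: eq_bigr => x _ /=.
  under eq_bigr => S _ do rewrite big_distrr /=.
  have pair_sum y : \sum_S f x * character S x * (g y * character S y) =
      f x * g y * \sum_S character S x * character S y.
    by rewrite mulr_sumr; apply: eq_bigr => S _; ring.
  rewrite exchange_big (bigD1 x) //= [X in _ + X]big1 => [|y neq_yx].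
    by rewrite addr0 pair_sum character_orthogonal eqxx mulrC.
  by rewrite pair_sum character_orthogonal eq_sym (negbTE neq_yx) mulr0.
rewrite /fourier; under eq_bigr => S _ do rewrite mulrACA.
rewrite -big_distrl /= sum_products; field.
by rewrite gt_eqF // exprn_gt0.
Qed.

Lemma fourierB (f g : cube n -> R) S :
  fourier (fun x => f x - g x) S = fourier f S - fourier g S.
Proof.
rewrite /fourier -mulrBl -sumrB; congr (_ / _).
by apply: eq_bigr => x _; rewrite mulrBl.
Qed.

Lemma flipK (k : 'I_n) : involutive (flip k).
Proof.
by move=> x; apply/ffunP => i; rewrite !ffunE; case: eqP => // _; rewrite negbK.
Qed.

Lemma character_flip k S (x : cube n) :
  character S (flip k x) = (if k \in S then -1 else 1) * character S x.
Proof.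
rewrite /character; case: ifP => kS; last first.
  rewrite mul1r; apply: eq_bigr => j jS.
  have neq_jk : j != k by apply: contraTneq jS => ->; rewrite kS.
  by rewrite !coordE ffunE (negbTE neq_jk).
rewrite (bigD1 k) //= [in RHS](bigD1 k) //= mulrA; congr (_ * _).
  by rewrite !coordE ffunE eqxx; case: (x k); rewrite ?mulrN1 ?opprK ?mulr1.
by apply: eq_bigr => j /andP [_ neq_jk]; rewrite !coordE ffunE (negbTE neq_jk).
Qed.

Lemma fourier_flip (f : cube n -> R) k S :
  fourier (fun x => f (flip k x)) S = (if k \in S then -1 else 1) * fourier f S.
Proof.
rewrite /fourier mulrA; congr (_ / _).
rewrite (reindex_inj (inv_inj (flipK k))) /= big_distrr /=.
apply: eq_bigr => x _; rewrite flipK.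
by rewrite -[\prod_(j in S) _]/(character S (flip k x)) character_flip mulrCA.
Qed.

End Characters.

Section BooleanFunctions.
Variables (R : realType) (n : nat) (f : cube n -> R).
Hypothesis f_bool : is_boolean_fun f.

Lemma parseval_boolean : \sum_(S : {set 'I_n}) fourier f S ^+ 2 = 1.
Proof.
under eq_bigr => S _ do rewrite expr2.
rewrite plancherel (eq_bigr (fun _ => 1)) => [|x _]; last first.
  by case: (f_bool x) => ->; rewrite ?mulr1 ?mulrNN ?mulr1.
by rewrite sumr_const card_ffun card_bool card_ord natrX mulfV // gt_eqF // exprn_gt0.
Qed.

Lemma infl_fourier k : infl f k = \sum_(S : {set 'I_n} | k \in S) fourier f S ^+ 2.
Proof.
pose g x := f x - f (flip k x).
have fourier_g S : fourier g S = (if k \in S then 2 else 0) * fourier f S.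
  by rewrite fourierB fourier_flip; case: ifP => _; ring.
have one_neqN1 : ((1 : R) == -1) = false by apply/negP => /eqP; lra.
have N1_neq1 : ((-1 : R) == 1) = false by rewrite eq_sym.
have sqr_g x : g x * g x = 4 * (f x != f (flip k x))%:R.
  rewrite /g; case: (f_bool x) => ->; case: (f_bool (flip k x)) => ->;
    by rewrite ?eqxx ?one_neqN1 ?N1_neq1 /=; lra.
have card_diff :
    \sum_x (f x != f (flip k x))%:R = #|[set x | f x != f (flip k x)]|%:R :> R.
  rewrite -sum1_card natr_sum [RHS]big_mkcond.
  by apply: eq_bigr => x _; rewrite inE; case: (_ != _).
have spectral_side : \sum_(S : {set 'I_n}) fourier g S * fourier g S =
    4 * \sum_(S : {set 'I_n} | k \in S) fourier f S ^+ 2.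
  rewrite [in RHS]big_mkcond mulr_sumr; apply: eq_bigr => S _.
  by rewrite fourier_g; case: ifP => _; ring.
have cube_side : (\sum_x g x * g x) / 2 ^+ n = 4 * infl f k.
  by rewrite (eq_bigr _ (fun x _ => sqr_g x)) -mulr_sumr card_diff /infl mulrA.
have four_neq0 : (4 : R) != 0 by apply/negP => /eqP; lra.
by have := plancherel g g; rewrite spectral_side cube_side => /(mulfI four_neq0).
Qed.

Lemma infl_fourier_compl k :
  1 - infl f k = \sum_(S : {set 'I_n} | k \notin S) fourier f S ^+ 2.
Proof.
rewrite infl_fourier -[1 in LHS]parseval_boolean.
by rewrite (bigID (fun S : {set 'I_n} => k \in S)) /=; lra.
Qed.

End BooleanFunctions.

Section RealInequalities.
Variable R : realType.

Lemma powR_ge1Dln (x e : R) : 0 < x -> 1 + e * ln x <= x `^ e.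
Proof. by move=> x_gt0; rewrite /powR gt_eqF // expR_ge1Dx. Qed.

Lemma sqr_ln_le_powR (a e : R) :
  a ^+ 2 + e * (a ^+ 2 * ln (a ^+ 2)) <= `|a| `^ (2 * (1 + e)).
Proof.
have [->|a_neq0] := eqVneq a 0.
  by rewrite expr0n /= mul0r mulr0 addr0 powR_ge0.
have sqr_gt0 : 0 < a ^+ 2 by rewrite lt_def sqr_ge0 sqrf_eq0 a_neq0.
rewrite powRrM powR_mulrn ?normr_ge0 // real_normK ?num_real //.
rewrite powRD ?(gt_eqF sqr_gt0) ?implybT // powRr1 ?sqr_ge0 //.
have := ler_wpM2l (ltW sqr_gt0) (powR_ge1Dln e sqr_gt0).
by rewrite mulrDr mulr1 mulrCA.
Qed.

Lemma ln_le_subr1 (x : R) : 0 < x -> ln x <= x - 1.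
Proof.
by move=> x_gt0; have := @le_ln1Dx R (x - 1); rewrite addrCA subrr addr0; apply; lra.
Qed.

Lemma gibbs_pointwise (w q : R) : 0 <= w -> 0 <= q -> (0 < w -> 0 < q) ->
  w * ln q <= w * ln w + (q - w).
Proof.
move=> w_ge0 q_ge0 w_q; have [->|w_neq0] := eqVneq w 0; first by rewrite !mul0r; lra.
have w_gt0 : 0 < w by rewrite lt_def w_neq0.
have q_gt0 := w_q w_gt0.
have := ler_wpM2l w_ge0 (ln_le_subr1 (divr_gt0 q_gt0 w_gt0)).
by rewrite ln_div ?posrE // !mulrBr mulr1 [w * (q / w)]mulrC divfK //; lra.
Qed.

Lemma gibbs_inequality (I : finType) (w q : I -> R) :
  (forall i, 0 <= w i) -> (forall i, 0 <= q i) -> (forall i, 0 < w i -> 0 < q i) ->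
  \sum_i q i <= \sum_i w i ->
  \sum_i w i * ln (q i) <= \sum_i w i * ln (w i).
Proof.
move=> w_ge0 q_ge0 w_q sum_q_le.
apply: le_trans (_ : _ <= \sum_i (w i * ln (w i) + (q i - w i))) _.
  by apply: ler_sum => i _; apply: gibbs_pointwise (w_ge0 i) (q_ge0 i) (w_q i).
by rewrite big_split /= sumrB gerDl subr_le0.
Qed.

Lemma subr1_le_xlnx (x : R) : 0 <= x -> x - 1 <= x * ln x.
Proof.
by move=> x_ge0; have := gibbs_pointwise x_ge0 ler01 (fun _ => ltr01); rewrite ln1 mulr0; lra.
Qed.

Lemma ln_prod (I : Type) (r : seq I) (P : pred I) (F : I -> R) :
  (forall i, P i -> 0 < F i) ->
  ln (\prod_(i <- r | P i) F i) = \sum_(i <- r | P i) ln (F i).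
Proof.
move=> F_gt0.
suff [] : 0 < \prod_(i <- r | P i) F i /\
    ln (\prod_(i <- r | P i) F i) = \sum_(i <- r | P i) ln (F i) by [].
apply: (big_ind2 (fun p s => 0 < p /\ ln p = s))
  => [|p1 s1 p2 s2 [p1_gt0 <-] [p2_gt0 <-]|i Pi].
- by rewrite ln1.
- by rewrite lnM ?posrE // mulr_gt0.
- by split; last by []; apply: F_gt0.
Qed.

Lemma entropy_term_le (x e : R) : 0 <= x -> 0 <= e ->
  e * (- (x * ln x) + x) <=
  (3 * e + 2 * e ^+ 2) * x + (if x == 0 then 0 else ((x / 4) `^ (- e) - 1) * x).
Proof.
move=> x_ge0 e_ge0; have [->|x_neq0] := eqVneq x 0.
  by rewrite !(mul0r, mulr0, oppr0, addr0).
have x_gt0 : 0 < x by rewrite lt_def x_neq0.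
have quarter_gt0 : 0 < x / 4 by rewrite divr_gt0 //; lra.
have ln4_ge0 : 0 <= ln (4 : R) by rewrite ln_ge0 //; lra.
have ln_quarter : ln (x / 4) <= ln x by rewrite ln_div ?posrE //; lra.
have key : - (e * ln x) <= (x / 4) `^ (- e) - 1.
  have := powR_ge1Dln (- e) quarter_gt0; have := ler_wpM2l e_ge0 ln_quarter; lra.
have := ler_wpM2r x_ge0 key.
have : 0 <= e * x * (2 + 2 * e) by rewrite !mulr_ge0 //; lra.
nra.
Qed.

End RealInequalities.

Section SpectralEntropy.
Variables (R : realType) (n : nat) (f : cube n -> R).
Hypothesis f_bool : is_boolean_fun f.
Local Notation w S := (fourier f S ^+ 2).

Definition infl_factor (S : {set 'I_n}) (k : 'I_n) : R :=
  if k \in S then infl f k else 1 - infl f k.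

Definition infl_product (S : {set 'I_n}) : R := \prod_(k < n) infl_factor S k.

Lemma infl_factor_fourier S k :
  infl_factor S k = \sum_(T : {set 'I_n} | (k \in T) == (k \in S)) w T.
Proof.
rewrite /infl_factor; case: ifP => kS.
  by rewrite (infl_fourier f_bool); apply: eq_bigl => T; rewrite eqb_id.
by rewrite (infl_fourier_compl f_bool); apply: eq_bigl => T; rewrite eqbF_neg.
Qed.

Lemma infl_factor_ge0 S k : 0 <= infl_factor S k.
Proof. by rewrite infl_factor_fourier; apply: sumr_ge0 => T _; apply: sqr_ge0. Qed.

Lemma infl_factor_gt0 S k : 0 < w S -> 0 < infl_factor S k.
Proof.
move=> wS_gt0; apply: lt_le_trans wS_gt0 _.
rewrite infl_factor_fourier (bigD1 S) ?eqxx //= lerDl.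
by apply: sumr_ge0 => T _; apply: sqr_ge0.
Qed.

Lemma sum_infl_product : \sum_(S : {set 'I_n}) infl_product S = 1.
Proof.
rewrite /infl_product /infl_factor.
rewrite -(bigA_distr _ _ (fun k => infl f k) (fun k => 1 - infl f k)) /=.
by rewrite big1 // => k _; rewrite subrKC.
Qed.

Lemma cross_entropy_infl_product :
  \sum_(S : {set 'I_n}) w S * ln (infl_product S) =
  \sum_(k < n) (infl f k * ln (infl f k) + (1 - infl f k) * ln (1 - infl f k)).
Proof.
transitivity (\sum_(k < n) \sum_(S : {set 'I_n}) w S * ln (infl_factor S k)).
  rewrite exchange_big; apply: eq_bigr => S _ /=.
  have [->|wS_neq0] := eqVneq (w S) 0.
    by rewrite mul0r big1 // => k _; rewrite mul0r.
  have wS_gt0 : 0 < w S by rewrite lt_def wS_neq0 sqr_ge0.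
  by rewrite ln_prod ?mulr_sumr // => k _; apply: infl_factor_gt0.
apply: eq_bigr => k _; rewrite (bigID (fun S : {set 'I_n} => k \in S)) /=.
congr (_ + _).
  rewrite [X in X * _](infl_fourier f_bool) mulr_suml.
  by apply: eq_bigr => S kS; rewrite /infl_factor kS.
rewrite [X in X * _](infl_fourier_compl f_bool) mulr_suml.
by apply: eq_bigr => S kS; rewrite /infl_factor (negbTE kS).
Qed.

Lemma spectral_entropy_le :
  - \sum_(S : {set 'I_n}) w S * ln (w S) <=
  \sum_(k < n) (- (infl f k * ln (infl f k)) + infl f k).
Proof.
have gibbs : \sum_S w S * ln (infl_product S) <= \sum_S w S * ln (w S).
  apply: gibbs_inequality => [S|S|S|]; first exact: sqr_ge0.
  - by apply: prodr_ge0 => k _; apply: infl_factor_ge0.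
  - by move=> wS_gt0; apply: prodr_gt0 => k _; apply: infl_factor_gt0.
  - by rewrite sum_infl_product (parseval_boolean f_bool).
rewrite cross_entropy_infl_product in gibbs.
rewrite -lerN2 in gibbs; apply: le_trans gibbs _.
rewrite -sumrN; apply: ler_sum => k _.
have compl_ge0 : 0 <= 1 - infl f k.
  by rewrite (infl_fourier_compl f_bool); apply: sumr_ge0 => S _; apply: sqr_ge0.
have := subr1_le_xlnx compl_ge0; lra.
Qed.

Lemma sum_powR_fourier_ge (e : R) :
  1 + e * \sum_(S : {set 'I_n}) w S * ln (w S) <=
  \sum_(S : {set 'I_n}) `|fourier f S| `^ (2 * (1 + e)).
Proof.
rewrite -{1}(parseval_boolean f_bool) mulr_sumr -big_split /=.
by apply: ler_sum => S _; apply: sqr_ln_le_powR.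
Qed.

End SpectralEntropy.

Unset Implicit Arguments.

Theorem mainTheorem9 (R : realType) (n : nat) (f : cube n -> R)
  (hf : is_boolean_fun f) (eps : R) (heps0 : 0 < eps) (heps1 : eps < 1 / 2) :
  \sum_(S : {set 'I_n}) powR `|fourier f S| (2 * (1 + eps))
  >= 1 - (3 * eps + 2 * eps ^+ 2) * total_infl f
       - \sum_(k < n)
           (if infl f k == 0 then 0
            else (powR (infl f k / 4) (- eps) - 1) * infl f k).
Proof.
set error := \sum_(k < n) _.
have entropy_le := ler_wpM2l (ltW heps0) (spectral_entropy_le hf).
have terms_le : eps * \sum_(k < n) (- (infl f k * ln (infl f k)) + infl f k) <=
    (3 * eps + 2 * eps ^+ 2) * total_infl f + error.
  rewrite /total_infl /error !mulr_sumr -big_split /=.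
  apply: ler_sum => k _; apply: entropy_term_le (ltW heps0).
  by rewrite (infl_fourier hf); apply: sumr_ge0 => S _; apply: sqr_ge0.
have := sum_powR_fourier_ge hf eps; rewrite /ge; lra.
Qed.
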